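(* Let $A\in\mathbb{R}^{r\times n}$, $\mathcal{X}\subseteq\mathbb{R}^n$, and let $f:\mathcal{D}\to\mathbb{R}$ be upper semicontinuous and quasi-convex, where $\mathcal{D}\subseteq\mathbb{R}^r$ is open and convex, and the set $A\mathcal{X}=\{Ax: x\in\mathcal{X}\}$ is compact with $A\mathcal{X}\subseteq\mathcal{D}$. Then there exists $c\in\mathbb{R}^r$ such that every optimal solution of $\max_{x\in\mathcal{X}}c^\top Ax$ is also an optimal solution of $\max\{f(Ax): x\in\mathcal{X}\}$.
   Context: A function $g:\mathcal{D}\to\mathbb{R}$ on a convex open set $\mathcal{D}$ is quasi-convex if $\{x\in\mathcal{D}: g(x)\le t\}$ is convex for every $t\in\mathbb{R}$. *)

From HB Require Import structures.
From mathcomp Require Import all_boot all_order all_algebra.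
From mathcomp Require Import all_classical all_reals all_analysis.
Set Implicit Arguments. Unset Strict Implicit. Unset Printing Implicit Defensive.
Import Order.TTheory GRing.Theory Num.Theory.
Import numFieldNormedType.Exports.
Local Open Scope classical_set_scope.
Local Open Scope ring_scope.

Definition quasi_convex_on {R : realType} {r : nat} (D : set 'cV[R]_r)
  (g : 'cV[R]_r -> R) : Prop :=
  forall t : R, convex_set [set x | D x /\ g x <= t].

Definition usc_on {R : realType} {r : nat} (D : set 'cV[R]_r)
  (g : 'cV[R]_r -> R) : Prop :=
  forall x, D x -> forall t : R, g x < t ->
    \forall y \near x, D y -> g y < t.

Definition lin_image {R : realType} {r n : nat} (A : 'M[R]_(r, n))
  (X : set 'cV[R]_n) : set 'cV[R]_r := [set y | exists2 x, X x & y = A *m x].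

Definition dotc {R : realType} {r : nat} (c y : 'cV[R]_r) : R := (c^T *m y) 0 0.

From HB Require Import structures.
From mathcomp Require Import all_boot all_order all_algebra.
From mathcomp Require Import all_classical all_reals all_analysis.
From mathcomp Require Import ring lra.
Import Order.TTheory GRing.Theory Num.Theory.
Import numFieldNormedType.Exports.
Local Open Scope classical_set_scope.
Local Open Scope ring_scope.

(* Since f is upper semicontinuous it attains its maximum over the compact set
   AX at some y = A xs.  The strict sublevel set L = {z in D | f z < f y} is
   open (upper semicontinuity) and convex (quasi-convexity) and misses y, so
   some c satisfies c.z < c.y on L.  A maximizer x of c.(A x) over X then has
   c.(A x) >= c.y, hence A x is not in L, i.e. f (A x) >= f y >= f (A x') for
   every x' in X.

   To separate y from L, pick z0 in L and project the point y - z0 onto the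
   closure of the cone {t (z - y) | t > 0, z in L}; y - z0 lies outside this
   closure, since otherwise y would be a convex combination of two points of L.
   The projection gives a hyperplane through the origin supporting the cone,
   i.e. a hyperplane through y supporting L, and openness of L makes the
   separation strict. *)

Lemma ge0_of_affine_ge0 {R : realFieldType} (b e : R) :
  (forall t, 0 < t -> t <= 1 -> 0 <= b + t * e) -> 0 <= b.
Proof.
move=> h; rewrite leNgt; apply/negP => b0.
have e1 : 0 < `|e| - b by have := normr_ge0 e; lra.
pose t := - b / (`|e| - b).
have t0 : 0 < t by rewrite divr_gt0 ?oppr_gt0.
have t1 : t <= 1 by rewrite ler_pdivrMr // mul1r; have := normr_ge0 e; lra.
have tE : t * `|e| = - b + t * b by rewrite /t; field; rewrite gt_eqF.
by have := h t t0 t1; have := ler_norm e; nra.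
Qed.

Lemma ge0_of_lt_pmul {R : realFieldType} (a b : R) :
  (forall t, 0 < t -> a < t * b) -> 0 <= b.
Proof.
move=> h; rewrite leNgt; apply/negP => b0.
have a1 : 0 < `|a| + 1 by have := normr_ge0 a; lra.
have t0 : 0 < (`|a| + 1) / - b by rewrite divr_gt0 ?oppr_gt0.
have := h _ t0.
have -> : (`|a| + 1) / - b * b = - (`|a| + 1) by field; rewrite ltr0_neq0.
by have := ler_norm (- a); rewrite normrN; lra.
Qed.

Lemma ex_max_seq {R : realDomainType} {T : eqType} (f : T -> R) (s : seq T) x0 :
  x0 \in s -> exists2 z, z \in s & forall w, w \in s -> f w <= f z.
Proof.
case: s => // a s _; elim: s a => [|b s IH] a.
  by exists a => [|w /[!inE] /eqP ->]; rewrite ?inE.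
have [z zs zmax] := IH b; have [faz|fza] := leP (f a) (f z).
  exists z => [|w /[!inE] /predU1P[->//|]]; first by rewrite inE zs orbT.
  by move=> ws; apply: zmax; rewrite inE ws.
exists a => [|w /[!inE] /predU1P[->//|ws]]; first exact: mem_head.
by apply/(le_trans (zmax _ _))/ltW; rewrite // inE ws orbT.
Qed.

Lemma convex_comb {R : numDomainType} {M : lmodType R} {A : set M} {x y : M} {t : R} :
  convex_set A -> 0 <= t -> t <= 1 -> A x -> A y -> A (t *: x + (1 - t) *: y).
Proof.
by move=> cA t0 t1 Ax Ay; have := cA x y (Itv01 t0 t1); rewrite !inE; apply.
Qed.

Lemma convex_closure {R : realFieldType} {V : normedModType R} {A : set V} :
  convex_set A -> convex_set (closure A).
Proof.
move=> cA; apply/convex_setW => x y; rewrite !inE => clx cly l t0 t1.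
rewrite inE => B /nbhs_ballP[e e0 sB].
have [x' [Ax' xx']] := clx _ (nbhsx_ballx x _ e0).
have [y' [Ay' yy']] := cly _ (nbhsx_ballx y _ e0).
move: xx' yy'; rewrite -!ball_normE /= => xx' yy'.
set t := l%:num in t0 t1 *.
exists (t *: x' + (1 - t) *: y'); split; first by apply: convex_comb; rewrite ?ltW.
apply: sB; rewrite -ball_normE /=.
have -> : (t *: x + (1 - t) *: y) - (t *: x' + (1 - t) *: y') =
    t *: (x - x') + (1 - t) *: (y - y').
  by rewrite !scalerBr opprD addrACA.
apply: le_lt_trans (ler_normD _ _) _.
rewrite !normrZ !gtr0_norm ?subr_gt0 //; nra.
Qed.

Lemma trmx_continuous {R : realType} (m n : nat) :
  continuous (@trmx R m n).
Proof.
move=> x P [P0 hP0 sP0]; exists (fun i j => P0 j i) => [i j|y hy].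
  by have := hP0 j i; rewrite mxE.
by apply: sP0 => i j; rewrite mxE; exact: hy.
Qed.

Lemma cV_box_compact {R : realType} (r : nat) (M : R) :
  compact [set v : 'cV[R]_r | forall i, `|v i 0| <= M].
Proof.
have := @rV_compact _ r _ (fun=> @segment_compact R (- M) M).
move/(continuous_compact (continuous_subspaceT (@trmx_continuous R 1 r))).
congr compact; apply/seteqP; split => v /=.
  by move=> [w hw <-] i; rewrite mxE ler_norml; have := hw i; rewrite /= in_itv.
move=> hv; exists v^T; last by rewrite trmxK.
by move=> i; rewrite /= mxE in_itv /= -ler_norml (ord1 ord0) hv.
Qed.

Section inner_product.
Context {R : realType} {r : nat}.
Implicit Types (u v w : 'cV[R]_r) (a : R).

Lemma dotcE u v : dotc u v = \sum_i u i 0 * v i 0.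
Proof. by rewrite /dotc mxE; apply: eq_bigr => i _; rewrite mxE. Qed.

Lemma dotcC u v : dotc u v = dotc v u.
Proof. by rewrite !dotcE; apply: eq_bigr => i _; rewrite mulrC. Qed.

Lemma dotcDr u v w : dotc u (v + w) = dotc u v + dotc u w.
Proof. by rewrite /dotc mulmxDr mxE. Qed.

Lemma dotcDl u v w : dotc (v + w) u = dotc v u + dotc w u.
Proof. by rewrite dotcC dotcDr !(dotcC u). Qed.

Lemma dotcZr a u v : dotc u (a *: v) = a * dotc u v.
Proof. by rewrite /dotc -scalemxAr mxE. Qed.

Lemma dotcZl a u v : dotc (a *: u) v = a * dotc u v.
Proof. by rewrite dotcC dotcZr dotcC. Qed.

Lemma dotcNl u v : dotc (- u) v = - dotc u v.
Proof. by rewrite -scaleN1r dotcZl mulN1r. Qed.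

Lemma dotcBr u v w : dotc u (v - w) = dotc u v - dotc u w.
Proof. by rewrite dotcDr -scaleN1r dotcZr mulN1r. Qed.

Lemma dotcc_ge0 u : 0 <= dotc u u.
Proof. by rewrite dotcE; apply: sumr_ge0 => i _; rewrite -expr2 sqr_ge0. Qed.

Lemma dotcc_gt0 u : u != 0 -> 0 < dotc u u.
Proof.
move=> u0; rewrite lt_def dotcc_ge0 andbT; apply: contra u0.
rewrite dotcE psumr_eq0 => [/allP u0|i _]; last by rewrite -expr2 sqr_ge0.
apply/eqP/matrixP => i j; rewrite (ord1 j) !mxE.
by apply/eqP; rewrite -sqrf_eq0 expr2; apply: u0; rewrite mem_index_enum.
Qed.

Lemma dotcc_DZ u v a :
  dotc (u + a *: v) (u + a *: v) = dotc u u + a * (2 * dotc u v + a * dotc v v).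
Proof. by rewrite !dotcDl !dotcDr !dotcZl !dotcZr (dotcC v u); ring. Qed.

Lemma dotc_continuous {T : topologicalType} (f g : T -> 'cV[R]_r) :
  continuous f -> continuous g -> continuous (fun x => dotc (f x) (g x)).
Proof.
move=> cf cg; under eq_fun do rewrite dotcE.
apply: (@continuous_big _ _ +%R 0 xpredT) => [|i _ x]; first exact: add_continuous.
apply: (@continuousM R T (fun x => f x i 0) (fun x => g x i 0)).
  exact: continuous_comp (cf x) (@coord_continuous R r 1 i 0 (f x)).
exact: continuous_comp (cg x) (@coord_continuous R r 1 i 0 (g x)).
Qed.

End inner_product.

Section nearest_point.
Context {R : realType} {r : nat}.
Implicit Types (K : set 'cV[R]_r) (q : 'cV[R]_r).

Lemma dotc_dist_continuous q :
  continuous (fun w : 'cV[R]_r => dotc (w - q) (w - q)).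
Proof.
have cq : continuous (fun w : 'cV[R]_r => w - q).
  by move=> x; apply: continuousB => //; exact: cst_continuous.
by apply: dotc_continuous; apply: cq.
Qed.

Lemma dotc_dist_sublevel_compact q (a : R) :
  compact [set w : 'cV[R]_r | dotc (w - q) (w - q) <= a].
Proof.
pose M := \sum_i `|q i 0| + (1 + a).
apply: (subclosed_compact _ (cV_box_compact r M)).
  apply: (preimage_closed (D := [set x | x <= a])) => [w _|].
    exact: dotc_dist_continuous.
  exact: closed_le.
move=> w /= hw i.
have wqi : (w i 0 - q i 0) ^+ 2 <= a.
  apply: le_trans hw; rewrite dotcE (bigD1 i) //= !mxE -expr2 lerDl.
  by apply: sumr_ge0 => j _; rewrite !mxE -expr2 sqr_ge0.
have qi : `|q i 0| <= \sum_i `|q i 0|.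
  by rewrite (bigD1 i) //= lerDl; apply: sumr_ge0 => j _.
have d1a : `|w i 0 - q i 0| <= 1 + a.
  move: wqi; set d := w i 0 - q i 0 => wqi.
  have := sqr_ge0 (2 * d - 1); have := sqr_ge0 (2 * d + 1).
  by rewrite ler_norml !expr2 in wqi * => *; apply/andP; split; nra.
have := ler_normD (w i 0 - q i 0) (q i 0); rewrite subrK /M; lra.
Qed.

Lemma closed_nearest_point {K} q : closed K -> K !=set0 ->
  exists2 m, K m & forall w, K w -> dotc (m - q) (m - q) <= dotc (w - q) (w - q).
Proof.
move=> clK [w0 Kw0].
pose S := [set w | dotc (w - q) (w - q) <= dotc (w0 - q) (w0 - q)] `&` K.
have S0 : S !=set0 by exists w0; split => /=.
have cS : compact S by apply: compact_closedI => //; exact: dotc_dist_sublevel_compact.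
have [m /set_mem[mw0 Km] mmin] :=
  compact_EVT_min S0 cS (continuous_subspaceT (@dotc_dist_continuous q)).
exists m => // w Kw.
have [ww0|w0w] := leP (dotc (w - q) (w - q)) (dotc (w0 - q) (w0 - q)).
  by apply: mmin; rewrite inE.
exact/(le_trans mw0)/ltW.
Qed.

Lemma closed_convex_separation {K q} : closed K -> convex_set K -> ~ K q ->
  exists c, forall w, K w -> dotc c q < dotc c w.
Proof.
move=> clK cvK Kq; have [K0|/nonemptyPn K0] := pselect (K !=set0); last first.
  by exists 0 => w; rewrite K0.
have [m Km mmin] := closed_nearest_point q clK K0.
have c0 : m - q != 0 by rewrite subr_eq0; apply: contraPneq Kq => <-.
exists (m - q) => w Kw.
have first_order : 0 <= 2 * dotc (m - q) (w - m).
  apply: (ge0_of_affine_ge0 _ (dotc (w - m) (w - m))) => t t0 t1.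
  have Kt : K (m + t *: (w - m)).
    rewrite scalerBr addrCA -{1}[m]scale1r -scalerBl.
    exact: (convex_comb cvK (ltW t0) t1 Kw Km).
  have := mmin _ Kt; rewrite addrAC dotcc_DZ lerDl.
  by rewrite pmulr_rge0.
have -> : w = (w - m) + (m - q) + q by rewrite addrA !subrK.
rewrite 2!dotcDr; have := dotcc_gt0 _ c0; lra.
Qed.

End nearest_point.

Section open_convex_separation.
Context {R : realType} {r : nat}.
Implicit Types (L : set 'cV[R]_r) (p c : 'cV[R]_r).

Lemma open_nbhs_norm {L z} : open L -> L z ->
  exists2 e, 0 < e & forall w, `|z - w| < e -> L w.
Proof. by move=> oL Lz; have /nbhs_normP[e e0 sL] := oL z Lz; exists e. Qed.

Lemma open_dotc_lb_strict {L c} {a : R} : open L -> c != 0 ->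
  (forall z, L z -> a <= dotc c z) -> forall z, L z -> a < dotc c z.
Proof.
move=> oL c0 lb z Lz; have [e e0 sL] := open_nbhs_norm oL Lz.
have nc0 : 0 < `|c| by rewrite normr_gt0.
pose d := e / (2 * `|c|).
have d0 : 0 < d by rewrite divr_gt0 // mulr_gt0.
have : L (z - d *: c).
  apply: sL; rewrite opprB addrC subrK normrZ gtr0_norm //.
  have -> : d * `|c| = e / 2 by rewrite /d; field; rewrite gt_eqF.
  lra.
move/lb; rewrite dotcBr dotcZr; have := mulr_gt0 d0 (dotcc_gt0 _ c0); lra.
Qed.

Definition cone_at p L : set 'cV[R]_r :=
  [set w | exists2 t, 0 < t & exists2 z, L z & w = t *: (z - p)].

Lemma cone_at_convex p {L} : convex_set L -> convex_set (cone_at p L).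
Proof.
move=> cL; apply/convex_setW => x y; rewrite !inE.
move=> [t1 t10 [z1 Lz1 ->]] [t2 t20 [z2 Lz2 ->]] l l0 l1; rewrite inE.
set k := l%:num in l0 l1 *.
pose s := k * t1 + (1 - k) * t2.
have s0 : 0 < s by rewrite addr_gt0 // mulr_gt0 // subr_gt0.
have a0 : 0 <= k * t1 / s by rewrite ltW // divr_gt0 // mulr_gt0.
have a1 : k * t1 / s <= 1.
  by rewrite ler_pdivrMr // mul1r lerDl ltW // mulr_gt0 // subr_gt0.
exists s => //; exists ((k * t1 / s) *: z1 + (1 - k * t1 / s) *: z2).
  exact: convex_comb.
by apply/matrixP => i j; rewrite !mxE /unstable.onem -/k /s; field; rewrite gt_eqF.
Qed.

Lemma reflection_notin_closure_cone_at {p L z0} : open L -> convex_set L ->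
  ~ L p -> L z0 -> ~ closure (cone_at p L) (p - z0).
Proof.
move=> oL cL Lp Lz0 clq; have [e e0 sL] := open_nbhs_norm oL Lz0.
have [_ [[t t0 [z Lz ->]]]] := clq _ (nbhsx_ballx (p - z0) _ e0).
rewrite -ball_normE /= => qw.
have Lw : L (p - t *: (z - p)).
  by apply: sL; rewrite -normrN opprB addrAC.
apply: Lp; have -> : p = (1 + t)^-1 *: (p - t *: (z - p)) + (1 - (1 + t)^-1) *: z.
  by apply/matrixP => i j; rewrite !mxE; field; rewrite gt_eqF ?addr_gt0.
apply: convex_comb => //; first by rewrite invr_ge0 addr_ge0 ?ltW.
by rewrite invf_le1 ?lerDl ?ltW ?addr_gt0.
Qed.

Lemma open_convex_separation {L p} : open L -> convex_set L -> ~ L p ->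
  exists c, forall z, L z -> dotc c z < dotc c p.
Proof.
move=> oL cL Lp; have [[z0 Lz0]|/nonemptyPn L0] := pselect (L !=set0); last first.
  by exists 0 => z; rewrite L0.
have [c sep] := closed_convex_separation (@closed_closure _ _)
  (convex_closure (cone_at_convex p cL)) (reflection_notin_closure_cone_at oL cL Lp Lz0).
have sep_cone z t : L z -> 0 < t -> dotc c (p - z0) < t * dotc c (z - p).
  move=> Lz t0; rewrite -dotcZr; apply: sep; apply: subset_closure.
  by exists t => //; exists z.
have c0 : c != 0.
  apply/eqP => c0; have := sep_cone z0 1 Lz0 ltr01.
  by rewrite c0 /dotc trmx0 !mul0mx mxE mulr0 ltxx.
have lb z : L z -> dotc c p <= dotc c z.
  move=> Lz; rewrite -subr_ge0 -dotcBr.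
  by apply: (ge0_of_lt_pmul (dotc c (p - z0))) => t; exact: sep_cone.
exists (- c) => z Lz; rewrite !dotcNl ltrN2.
exact: (open_dotc_lb_strict oL c0 lb).
Qed.

End open_convex_separation.

Section sublevel_sets.
Context {R : realType} {r : nat} {D : set 'cV[R]_r} {f : 'cV[R]_r -> R}.

Lemma usc_on_compact_max {K} : usc_on D f -> compact K -> K `<=` D -> K !=set0 ->
  exists2 y, K y & forall z, K z -> f z <= f y.
Proof.
move=> usc cK KD [y0 Ky0]; apply: contrapT => nomax.
have above y : K y -> exists2 z, K z & f y < f z.
  move=> Ky; apply: contrapT => nz; apply: nomax; exists y => // z Kz.
  by rewrite leNgt; apply/negP => yz; apply: nz; exists z.
move: cK; rewrite compact_cover.
move=> /(_ _ K (fun z => interior [set w | D w -> f w < f z])) [].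
- by move=> z _; exact: open_interior.
- move=> y Ky; have [z Kz yz] := above y Ky.
  by exists z => //; exact: usc (KD y Ky) _ yz.
move=> Z ZK cover; have [z0 Zz0 _] := cover y0 Ky0.
have [zm Zzm zmax] := ex_max_seq f (finmap.enum_fset Z) z0 Zz0.
have Kzm : K zm by apply/set_mem/ZK.
have [z Zz zmz] := cover zm Kzm.
by have := nbhs_singleton zmz (KD _ Kzm); rewrite ltNge zmax.
Qed.

Lemma usc_on_strict_sublevel_open t : open D -> usc_on D f ->
  open [set z | D z /\ f z < t].
Proof.
move=> oD usc; rewrite openE => z [Dz fzt].
apply: filterS (filterI (usc z Dz t fzt) (oD z Dz)) => w [fw Dw].
by split => //; exact: fw.
Qed.

Lemma quasi_convex_on_strict_sublevel_convex t : quasi_convex_on D f ->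
  convex_set [set z | D z /\ f z < t].
Proof.
move=> qc x y l; rewrite !inE => -[Dx fx] [Dy fy].
have := qc (Num.max (f x) (f y)) x y l; rewrite !inE.
move=> /(_ (conj Dx _) (conj Dy _)); rewrite !le_max !lexx orbT => /(_ isT isT).
by case=> Dxy fxy; split => //; apply: le_lt_trans fxy _; rewrite gt_max fx fy.
Qed.

End sublevel_sets.

Theorem proposition8 (R : realType) (r n : nat) (A : 'M[R]_(r, n))
  (X : set 'cV[R]_n) (D : set 'cV[R]_r) (f : 'cV[R]_r -> R) :
  open D -> convex_set D ->
  usc_on D f -> quasi_convex_on D f ->
  compact (lin_image A X) -> lin_image A X `<=` D ->
  exists c : 'cV[R]_r,
    forall x, X x -> (forall y, X y -> dotc c (A *m y) <= dotc c (A *m x)) ->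
      forall y, X y -> f (A *m y) <= f (A *m x).
Proof.
move=> oD _ usc qc cAX AXD.
have [AX0|/nonemptyPn AX0] := pselect (lin_image A X !=set0); last first.
  exists 0 => x Xx; suff : lin_image A X (A *m x) by rewrite AX0.
  by exists x.
have [_ [xs Xxs ->] fmax] := usc_on_compact_max usc cAX AXD AX0.
have xs_notin : ~ [set z | D z /\ f z < f (A *m xs)] (A *m xs).
  by case=> _; rewrite ltxx.
have [c sep] := open_convex_separation
  (usc_on_strict_sublevel_open _ oD usc)
  (quasi_convex_on_strict_sublevel_convex _ qc) xs_notin.
exists c => x Xx xopt y Xy.
apply: le_trans (fmax _ (ex_intro2 _ _ y Xy erefl)) _.
rewrite leNgt; apply/negP => fx_lt.
have AXx : lin_image A X (A *m x) by exists x.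
by have := sep _ (conj (AXD _ AXx) fx_lt); rewrite ltNge (xopt _ Xxs).
Qed.
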